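(* (i) The function $\phi_{-1}^{-1}(t)=-\mathfrak{W}_0(-e^{-(t+1)})$, $t\in[0,\infty)$, is completely monotone on $[0,\infty)$. (ii) The function $\phi_{-2}^{-1}(t)=t+1-\sqrt{(t+1)^2-1}$, $t\in[0,\infty)$ (the inverse of $\phi_{-2}(x)=\tfrac12(x+x^{-1}-2)$ restricted to $x\in(0,1]$), is completely monotone on $[0,\infty)$.
   Context: $\phi_{-1}(x)=x-1-\log x$ and $\phi_{-2}(x)=\frac12(x^{-1}+x-2)$ for $x>0$; each is a strictly decreasing bijection from $(0,1]$ onto $[0,\infty)$, and $\phi_\lambda^{-1}$ denotes the inverse of this restriction. $\mathfrak{W}_0$ is the principal branch of the Lambert W function. A function $h$ on an interval $I$ is completely monotone on $I$ if it has derivatives of all orders on the interior of $I$ and $(-1)^k h^{(k)}(x)\ge0$ for all $k=0,1,2,\dots$ and all $x$ in the interior of $I$. *)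

From Stdlib Require Import Reals ClassicalEpsilon.
From Coquelicot Require Import Coquelicot.
Open Scope R_scope.

Definition phi_m1 (x : R) : R := x - 1 - ln x.
Definition phi_m2 (x : R) : R := / 2 * (/ x + x - 2).

Definition phi_inv (phi : R -> R) (t : R) : R :=
  epsilon (inhabits 0) (fun x => 0 < x <= 1 /\ phi x = t).

(* principal branch of Lambert W: for y >= -1/e, the unique w >= -1 with w e^w = y *)
Definition lambertW0 (y : R) : R :=
  epsilon (inhabits 0) (fun w => -1 <= w /\ w * exp w = y).

(* h is completely monotone on [a, +oo): derivatives of all orders exist on
   the interior (a, +oo) and (-1)^k h^(k)(x) >= 0 there. *)
Definition completely_monotone_from (a : R) (h : R -> R) : Prop :=
  forall (k : nat) (x : R), a < x ->
    ex_derive_n h k x /\ 0 <= (-1) ^ k * Derive_n h k x.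

(* Both inverses y = phi^-1 solve an autonomous equation y' = -F(y) on (0, oo)
   with 0 < y < 1: F(y) = y / (1 - y) for phi_{-1} and F(y) = 2 y^2 / (1 - y^2)
   for phi_{-2}.  Call a nonnegative combination of terms y^a (1 - y^m)^-b a
   positive expression; such expressions are nonnegative on (0, 1), their
   derivatives are again positive expressions, and F is one.  By induction,
   (-1)^k y^(k) = P_k(y) with P_0 = y and P_(k+1) = F P_k', a positive
   expression, which gives complete monotonicity.  The closed forms come from
   solving phi(x) = t: for phi_{-1} it reads (-x) e^(-x) = -e^(-(t+1)), for
   phi_{-2} it is the quadratic x^2 - 2(t+1) x + 1 = 0. *)

From Stdlib Require Import Reals Lra Lia List ClassicalEpsilon Ranalysis5.
From Coquelicot Require Import Coquelicot.
Import ListNotations.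
Open Scope R_scope.

Record monom := Monom { coef : R; ypow : nat; invpow : nat }.

Section Monomials.

Variable n : nat.

Definition monom_val (u : monom) (y : R) : R :=
  coef u * y ^ ypow u * (/ (1 - y ^ S n)) ^ invpow u.

Definition poly_val (p : list monom) (y : R) : R :=
  fold_right (fun u acc => monom_val u y + acc) 0 p.

Definition monom_deriv (u : monom) : list monom :=
  [Monom (coef u * INR (ypow u)) (pred (ypow u)) (invpow u);
   Monom (coef u * INR (invpow u) * INR (S n)) (ypow u + n) (S (invpow u))].

Definition poly_deriv (p : list monom) : list monom := flat_map monom_deriv p.

Definition monom_mul (v : monom) (p : list monom) : list monom :=
  map (fun u => Monom (coef u * coef v) (ypow u + ypow v) (invpow u + invpow v)) p.

Definition nonneg_coefs (p : list monom) : Prop := List.Forall (fun u => 0 <= coef u) p.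

Lemma poly_val_app p1 p2 y : poly_val (p1 ++ p2) y = poly_val p1 y + poly_val p2 y.
Proof. induction p1 as [|u p IH]; simpl; [ring | rewrite IH; ring]. Qed.

Lemma poly_val_monom_mul v p y : poly_val (monom_mul v p) y = monom_val v y * poly_val p y.
Proof.
  induction p as [|u p IH]; simpl; [ring|].
  rewrite IH; unfold monom_val; simpl; rewrite !pow_add; ring.
Qed.

Lemma is_derive_kernel_pow (b : nat) (y : R) :
  1 - y ^ S n <> 0 ->
  is_derive (fun y => (/ (1 - y ^ S n)) ^ b) y
    (INR b * INR (S n) * y ^ n * (/ (1 - y ^ S n)) ^ S b).
Proof.
  intros H.
  assert (Hpow : is_derive (fun y => y ^ S n) y (INR (S n) * 1 * y ^ n))
    by exact (is_derive_pow (fun y => y) (S n) y 1 (is_derive_id y)).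
  assert (Hker : is_derive (fun y => / (1 - y ^ S n)) y
                   (- (0 - INR (S n) * 1 * y ^ n) / (1 - y ^ S n) ^ 2)).
  { apply (is_derive_inv (fun y => 1 - y ^ S n)); [| exact H].
    exact (is_derive_minus (fun _ => 1) (fun y => y ^ S n) y 0 _ (is_derive_const 1 y) Hpow). }
  replace (INR b * INR (S n) * y ^ n * (/ (1 - y ^ S n)) ^ S b)
    with (INR b * (- (0 - INR (S n) * 1 * y ^ n) / (1 - y ^ S n) ^ 2)
          * (/ (1 - y ^ S n)) ^ pred b).
  - exact (is_derive_pow _ b y _ Hker).
  - destruct b as [|b]; simpl; [ring | field; exact H].
Qed.

Lemma is_derive_monom_val u y :
  1 - y ^ S n <> 0 -> is_derive (monom_val u) y (poly_val (monom_deriv u) y).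
Proof.
  destruct u as [c a b]; intros H.
  assert (Hya : is_derive (fun y => y ^ a) y (INR a * 1 * y ^ pred a))
    by exact (is_derive_pow (fun y => y) a y 1 (is_derive_id y)).
  assert (Hd := is_derive_mult _ _ y _ _ (is_derive_scal _ y c _ Hya)
                  (is_derive_kernel_pow b y H) (fun _ _ => Rmult_comm _ _)).
  replace (poly_val (monom_deriv (Monom c a b)) y) with
    (c * (INR a * 1 * y ^ pred a) * (/ (1 - y ^ S n)) ^ b
     + c * y ^ a * (INR b * INR (S n) * y ^ n * (/ (1 - y ^ S n)) ^ S b)).
  - exact Hd.
  - unfold poly_val, monom_val; simpl; rewrite pow_add; ring.
Qed.

Lemma is_derive_poly_val p y :
  1 - y ^ S n <> 0 -> is_derive (poly_val p) y (poly_val (poly_deriv p) y).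
Proof.
  intros H; induction p as [|u p IH].
  - exact (is_derive_const 0 y).
  - unfold poly_deriv; cbn [flat_map]; rewrite poly_val_app.
    exact (is_derive_plus (monom_val u) (poly_val p) y _ _ (is_derive_monom_val u y H) IH).
Qed.

Lemma monom_val_nonneg u y : 0 <= coef u -> 0 < y < 1 -> 0 <= monom_val u y.
Proof.
  intros Hc Hy; unfold monom_val.
  assert (y ^ S n < 1) by (apply pow_lt_1_compat; [lra | lia]).
  repeat apply Rmult_le_pos; try apply pow_le; try lra.
  left; apply Rinv_0_lt_compat; lra.
Qed.

Lemma poly_val_nonneg p y : nonneg_coefs p -> 0 < y < 1 -> 0 <= poly_val p y.
Proof.
  intros Hp Hy; induction Hp as [|u p Hu _ IH]; simpl; [lra|].
  generalize (monom_val_nonneg u y Hu Hy); lra.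
Qed.

Lemma nonneg_poly_deriv p : nonneg_coefs p -> nonneg_coefs (poly_deriv p).
Proof.
  intros Hp; induction Hp as [|u p Hu _ IH]; [constructor|].
  apply Forall_app; split; [|exact IH].
  repeat apply Forall_cons; try apply Forall_nil; cbn [coef];
    repeat apply Rmult_le_pos; auto using pos_INR.
Qed.

Lemma nonneg_monom_mul v p : 0 <= coef v -> nonneg_coefs p -> nonneg_coefs (monom_mul v p).
Proof.
  intros Hv Hp; induction Hp as [|u p Hu _ IH]; constructor; [simpl; nra | exact IH].
Qed.

End Monomials.

Section CompletelyMonotone.

Variables (n : nat) (F : monom) (y : R -> R) (a : R).
Hypothesis F_nonneg : 0 <= coef F.
Hypothesis y_range : forall t, a < t -> 0 < y t < 1.
Hypothesis y_ode : forall t, a < t -> is_derive y t (- monom_val n F (y t)).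

Fixpoint deriv_poly (k : nat) : list monom :=
  match k with
  | O => [Monom 1 1 0]
  | S k => monom_mul F (poly_deriv n (deriv_poly k))
  end.

Lemma nonneg_deriv_poly k : nonneg_coefs (deriv_poly k).
Proof.
  induction k as [|k IH]; simpl.
  - apply Forall_cons; [cbn [coef]; lra | apply Forall_nil].
  - apply nonneg_monom_mul, nonneg_poly_deriv; assumption.
Qed.

Lemma Derive_n_ode k t :
  a < t -> ex_derive_n y k t /\ Derive_n y k t = (-1) ^ k * poly_val n (deriv_poly k) (y t).
Proof.
  revert t; induction k as [|k IH]; intros t Ht.
  - split; [exact I|]. simpl; unfold monom_val; simpl; ring.
  - assert (Hloc : locally t (fun u => (-1) ^ k * poly_val n (deriv_poly k) (y u) = Derive_n y k u)).
    { apply (filter_imp (fun u => a < u)); [intros u Hu; symmetry; apply IH, Hu |].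
      exact (open_gt a t Ht). }
    assert (Hyt : 1 - y t ^ S n <> 0).
    { destruct (y_range t Ht).
      assert (y t ^ S n < 1) by (apply pow_lt_1_compat; [lra | lia]). lra. }
    assert (HD : is_derive (fun u => (-1) ^ k * poly_val n (deriv_poly k) (y u)) t
                   ((-1) ^ k * (- monom_val n F (y t) * poly_val n (poly_deriv n (deriv_poly k)) (y t)))).
    { apply is_derive_scal, (is_derive_comp (poly_val n (deriv_poly k)) y).
      - exact (is_derive_poly_val n _ _ Hyt).
      - exact (y_ode t Ht). }
    split.
    + apply (ex_derive_ext_loc _ _ t Hloc). eexists; exact HD.
    + change (Derive (Derive_n y k) t = (-1) ^ S k * poly_val n (deriv_poly (S k)) (y t)).
      rewrite <- (Derive_ext_loc _ _ t Hloc); erewrite is_derive_unique by exact HD.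
      simpl; rewrite poly_val_monom_mul; ring.
Qed.

Lemma completely_monotone_of_ode : completely_monotone_from a y.
Proof.
  intros k t Ht; destruct (Derive_n_ode k t Ht) as [Hex ->]; split; [exact Hex|].
  rewrite <- Rmult_assoc, <- Rpow_mult_distr.
  replace (-1 * -1) with 1 by ring; rewrite pow1, Rmult_1_l.
  exact (poly_val_nonneg n _ _ (nonneg_deriv_poly k) (y_range t Ht)).
Qed.

End CompletelyMonotone.

Lemma phi_inv_spec (phi : R -> R) (t : R) :
  (exists x, 0 < x <= 1 /\ phi x = t) -> 0 < phi_inv phi t <= 1 /\ phi (phi_inv phi t) = t.
Proof. exact (epsilon_spec (inhabits 0) (fun x => 0 < x <= 1 /\ phi x = t)). Qed.

Lemma phi_inv_eq (phi : R -> R) (x t : R) :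
  (forall x z, 0 < x -> x < z -> z <= 1 -> phi z < phi x) ->
  0 < x <= 1 -> phi x = t -> phi_inv phi t = x.
Proof.
  intros Hdec Hx Hxt.
  destruct (phi_inv_spec phi t (ex_intro _ x (conj Hx Hxt))) as [Hy Hyt].
  destruct (Rtotal_order (phi_inv phi t) x) as [L | [E | L]]; [| exact E |].
  - generalize (Hdec _ _ (proj1 Hy) L (proj2 Hx)); lra.
  - generalize (Hdec _ _ (proj1 Hx) L (proj2 Hy)); lra.
Qed.

Lemma phi_inv_range (phi : R -> R) (t : R) :
  (exists x, 0 < x <= 1 /\ phi x = t) -> phi 1 = 0 -> 0 < t -> 0 < phi_inv phi t < 1.
Proof.
  intros Hex H1 Ht; destruct (phi_inv_spec phi t Hex) as [[H0 [Hlt | Heq]] Hphi]; [lra|].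
  rewrite Heq, H1 in Hphi; lra.
Qed.

Lemma is_derive_inverse_decr (f g : R -> R) (lb ub t l : R) :
  lb < ub ->
  (forall x z, lb <= x -> x < z -> z <= ub -> f z < f x) ->
  (forall x, lb <= x <= ub -> ex_derive f x) ->
  (forall s, f ub <= s <= f lb -> lb <= g s <= ub /\ f (g s) = s) ->
  f ub < t < f lb -> is_derive f (g t) l -> l <> 0 ->
  is_derive g t (/ l).
Proof.
  intros Hlt Hdec Hder Hinv Ht Hl Hl0.
  (* Ranalysis5 inverts increasing functions only: apply it to -f, inverted by g (- _). *)
  set (F := fun x => - f x); set (G := fun u => g (- u)).
  assert (HF : forall x z, lb <= x -> x < z -> z <= ub -> F x < F z)
    by (intros; unfold F; apply Ropp_lt_contravar; auto).
  assert (HG : forall u, F lb <= u -> u <= F ub -> comp F G u = id u /\ lb <= G u <= ub).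
  { intros u H1 H2; unfold F, G, comp, id in *.
    destruct (Hinv (- u)) as [Hr Hfg]; [lra|]. rewrite Hfg; split; [ring | exact Hr]. }
  assert (HFt : F lb < - t < F ub) by (unfold F; lra).
  assert (Hcont : continuity_pt G (- t)).
  { apply (continuity_pt_recip_interv F G lb ub Hlt HF); [apply HG | apply HG | | exact HFt].
    intros x Hx; apply continuity_pt_opp, derivable_continuous_pt, ex_derive_Reals_0, Hder, Hx. }
  assert (Prf : forall x, G (F lb) <= x <= G (F ub) -> derivable_pt F x).
  { intros x Hx. apply ex_derive_Reals_0, (ex_derive_opp f), Hder.
    destruct (HG (F lb)) as [_ Hl1]; [lra | lra |]. destruct (HG (F ub)) as [_ Hu1]; [lra | lra |].
    lra. }
  assert (HGt : G (F lb) <= G (- t) <= G (F ub)).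
  { assert (Hincr := f_incr_implies_g_incr_interv F G lb ub Hlt HF
                       (fun u H1 H2 => proj1 (HG u H1 H2)) (fun u H1 H2 => proj2 (HG u H1 H2))).
    split; left; apply Hincr; lra. }
  assert (HdF : derive_pt F (G (- t)) (Prf _ HGt) = - l).
  { apply derive_pt_eq_0, is_derive_Reals. unfold G; rewrite Ropp_involutive.
    exact (is_derive_opp f (g t) l Hl). }
  assert (HdG := derivable_pt_lim_recip_interv F G (F lb) (F ub) (- t) Prf Hcont
                   ltac:(lra) HFt HGt (fun u Hu => proj1 (HG u (proj1 Hu) (proj2 Hu)))).
  rewrite HdF in HdG; apply is_derive_Reals in HdG; [| intro E; apply Hl0; lra].
  apply (is_derive_ext (fun u => G (- u))); [intro u; unfold G; rewrite Ropp_involutive; reflexivity|].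
  replace (/ l) with (scal (-1) (1 / - l)) by (unfold scal; simpl; unfold mult; simpl; field; exact Hl0).
  apply (is_derive_comp G (fun u => - u)); [exact HdG|].
  auto_derive; [exact I | ring].
Qed.

Lemma phi_m2_decreasing x z : 0 < x -> x < z -> z <= 1 -> phi_m2 z < phi_m2 x.
Proof.
  intros Hx Hxz Hz; unfold phi_m2.
  assert (E : / x + x - (/ z + z) = (z - x) * (1 - x * z) / (x * z)) by (field; lra).
  assert (0 < (z - x) * (1 - x * z) / (x * z)).
  { apply Rdiv_lt_0_compat; [apply Rmult_lt_0_compat|]; nra. }
  lra.
Qed.

Lemma phi_m2_closed_form t :
  0 <= t ->
  0 < t + 1 - sqrt ((t + 1) ^ 2 - 1) <= 1 /\ phi_m2 (t + 1 - sqrt ((t + 1) ^ 2 - 1)) = t.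
Proof.
  intros Ht.
  assert (Hr : 0 <= sqrt ((t + 1) ^ 2 - 1)) by apply sqrt_pos.
  assert (Hrr : sqrt ((t + 1) ^ 2 - 1) * sqrt ((t + 1) ^ 2 - 1) = (t + 1) ^ 2 - 1)
    by (apply sqrt_sqrt; nra).
  set (r := sqrt ((t + 1) ^ 2 - 1)) in *.
  assert (r < t + 1) by nra.
  assert (t <= r) by nra.
  split; [lra|]. unfold phi_m2.
  (* (t + 1 - r) (t + 1 + r) = 1 *)
  replace (/ (t + 1 - r)) with (t + 1 + r); [field|].
  field_simplify_eq; [nra | lra].
Qed.

Lemma phi_inv_m2_closed_form t :
  0 <= t -> phi_inv phi_m2 t = t + 1 - sqrt ((t + 1) ^ 2 - 1).
Proof.
  intros Ht; destruct (phi_m2_closed_form t Ht).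
  apply phi_inv_eq; [exact phi_m2_decreasing | assumption | assumption].
Qed.

Lemma is_derive_phi_m2_closed_form t :
  0 < t ->
  is_derive (fun t => t + 1 - sqrt ((t + 1) ^ 2 - 1)) t
    (- monom_val 1 (Monom 2 2 1) (t + 1 - sqrt ((t + 1) ^ 2 - 1))).
Proof.
  intros Ht.
  assert (Hpos : 0 < (t + 1) ^ 2 - 1) by nra.
  assert (Hr : 0 < sqrt ((t + 1) ^ 2 - 1)) by (apply sqrt_lt_R0, Hpos).
  assert (Hrr : sqrt ((t + 1) ^ 2 - 1) * sqrt ((t + 1) ^ 2 - 1) = (t + 1) ^ 2 - 1)
    by (apply sqrt_sqrt; lra).
  auto_derive; [exact Hpos|].
  replace (sqrt ((t + 1) * ((t + 1) * 1) + - (1))) with (sqrt ((t + 1) ^ 2 - 1))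
    by (f_equal; ring).
  set (r := sqrt ((t + 1) ^ 2 - 1)) in *; unfold monom_val; cbn [coef ypow invpow].
  assert (E : 1 - (t + 1 - r) ^ S 1 = 2 * r * (t + 1 - r)) by (simpl in *; nra).
  rewrite E; field; nra.
Qed.

Lemma phi_m2_root_exists t : 0 <= t -> exists x, 0 < x <= 1 /\ phi_m2 x = t.
Proof. intros Ht; eexists; exact (phi_m2_closed_form t Ht). Qed.

Lemma phi_m2_1 : phi_m2 1 = 0.
Proof. unfold phi_m2; field. Qed.

Lemma completely_monotone_phi_inv_m2 : completely_monotone_from 0 (phi_inv phi_m2).
Proof.
  apply (completely_monotone_of_ode 1 (Monom 2 2 1)); [simpl; lra | |].
  - intros t Ht; apply phi_inv_range; [apply phi_m2_root_exists; lra | exact phi_m2_1 | exact Ht].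
  - intros t Ht; rewrite phi_inv_m2_closed_form by lra.
    apply (is_derive_ext_loc (fun t => t + 1 - sqrt ((t + 1) ^ 2 - 1))).
    + apply (filter_imp (fun u => 0 < u)); [| exact (open_gt 0 t Ht)].
      intros u Hu; symmetry; apply phi_inv_m2_closed_form; lra.
    + exact (is_derive_phi_m2_closed_form t Ht).
Qed.

Lemma phi_m1_1 : phi_m1 1 = 0.
Proof. unfold phi_m1; rewrite ln_1; ring. Qed.

Lemma is_derive_phi_m1 x : 0 < x -> is_derive phi_m1 x (1 - / x).
Proof. intros Hx; unfold phi_m1; auto_derive; [exact Hx | field; lra]. Qed.

Lemma phi_m1_decreasing x z : 0 < x -> x < z -> z <= 1 -> phi_m1 z < phi_m1 x.
Proof.
  intros Hx Hxz Hz.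
  (* e^(x - z) > 1 + x - z gives z e^(x - z) > x + (z - x)(1 - z) >= x *)
  assert (Hexp : x < z * exp (x - z)).
  { assert (H := exp_ineq1 (x - z) ltac:(lra)). nra. }
  apply ln_increasing in Hexp; [| exact Hx].
  rewrite ln_mult, ln_exp in Hexp by (lra || apply exp_pos).
  unfold phi_m1; lra.
Qed.

Lemma phi_m1_exp t : phi_m1 (exp (- (t + 1))) = t + exp (- (t + 1)).
Proof. unfold phi_m1; rewrite ln_exp; ring. Qed.

Lemma exp_neg_succ_bounds t : 0 <= t -> 0 < exp (- (t + 1)) < 1.
Proof.
  intros Ht; split; [apply exp_pos|].
  apply Rlt_le_trans with (exp 0); [apply exp_increasing; lra | rewrite exp_0; lra].
Qed.

Lemma phi_m1_root_exists t : 0 <= t -> exists x, 0 < x <= 1 /\ phi_m1 x = t.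
Proof.
  intros Ht; destruct Ht as [Ht | <-]; [| exists 1; split; [lra | exact phi_m1_1]].
  destruct (exp_neg_succ_bounds t (Rlt_le _ _ Ht)) as [Ha0 Ha1].
  destruct (IVT_interv (fun x => t - phi_m1 x) (exp (- (t + 1))) 1) as [x [Hx Hphi]].
  - intros z Hz; apply continuity_pt_minus; [apply continuity_pt_const; intros ? ?; reflexivity|].
    apply derivable_continuous_pt, ex_derive_Reals_0.
    eexists; apply is_derive_phi_m1; lra.
  - exact Ha1.
  - rewrite phi_m1_exp; lra.
  - rewrite phi_m1_1; lra.
  - exists x; split; [lra | lra].
Qed.

Lemma phi_inv_m1_lambertW0 t :
  0 <= t -> phi_inv phi_m1 t = - lambertW0 (- exp (- (t + 1))).
Proof.
  intros Ht; unfold lambertW0.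
  destruct (epsilon_spec (inhabits 0) (fun w => -1 <= w /\ w * exp w = - exp (- (t + 1))))
    as [Hw1 Hw].
  { destruct (phi_inv_spec phi_m1 t (phi_m1_root_exists t Ht)) as [Hx Hphi].
    set (x := phi_inv phi_m1 t) in *; exists (- x); split; [lra|].
    unfold phi_m1 in Hphi; replace (- (t + 1)) with (ln x + - x) by lra.
    rewrite exp_plus, exp_ln by lra; ring. }
  set (w := epsilon _ _) in *.
  assert (Hneg : w < 0).
  { destruct (Rlt_le_dec w 0) as [| Hge]; [assumption|].
    assert (0 <= w * exp w) by (apply Rmult_le_pos; [lra | left; apply exp_pos]).
    generalize (exp_pos (- (t + 1))); lra. }
  assert (Hphi : phi_m1 (- w) = t).
  { assert (E : - w * exp (- - w) = exp (- (t + 1))) by (rewrite Ropp_involutive; lra).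
    apply (f_equal ln) in E; rewrite ln_mult, !ln_exp in E by (lra || apply exp_pos).
    unfold phi_m1; lra. }
  rewrite (phi_inv_eq phi_m1 (- w) t phi_m1_decreasing); [ring | lra | exact Hphi].
Qed.

Lemma phi_inv_m1_spec s : 0 <= s -> 0 < phi_inv phi_m1 s <= 1 /\ phi_m1 (phi_inv phi_m1 s) = s.
Proof. intros Hs; apply phi_inv_spec, phi_m1_root_exists, Hs. Qed.

Lemma phi_inv_m1_lower_bound a s : 0 < a <= 1 -> 0 <= s <= phi_m1 a -> a <= phi_inv phi_m1 s.
Proof.
  intros Ha Hs; destruct (phi_inv_m1_spec s (proj1 Hs)) as [Hx Hphi].
  destruct (Rlt_le_dec (phi_inv phi_m1 s) a) as [Hlt | Hge]; [| exact Hge].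
  generalize (phi_m1_decreasing _ _ (proj1 Hx) Hlt (proj2 Ha)); lra.
Qed.

Lemma is_derive_phi_inv_m1 t :
  0 < t -> is_derive (phi_inv phi_m1) t (- monom_val 0 (Monom 1 1 1) (phi_inv phi_m1 t)).
Proof.
  intros Ht.
  assert (Hx : 0 < phi_inv phi_m1 t < 1)
    by (apply phi_inv_range; [apply phi_m1_root_exists; lra | exact phi_m1_1 | exact Ht]).
  set (x := phi_inv phi_m1 t) in *.
  set (a := exp (- (t + 1))).
  assert (Ha : 0 < a < 1) by apply (exp_neg_succ_bounds t), Rlt_le, Ht.
  replace (- monom_val 0 (Monom 1 1 1) x) with (/ (1 - / x))
    by (unfold monom_val; simpl; field; lra).
  apply (is_derive_inverse_decr phi_m1 _ a 1); [lra | | | | | |].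
  - intros y z Hy Hyz Hz; apply phi_m1_decreasing; lra.
  - intros y Hy; eexists; apply is_derive_phi_m1; lra.
  - intros s Hs; rewrite phi_m1_1 in Hs.
    destruct (phi_inv_m1_spec s (proj1 Hs)) as [Hr Hphi].
    split; [split; [apply phi_inv_m1_lower_bound; lra | lra] | exact Hphi].
  - rewrite phi_m1_1; unfold a; rewrite phi_m1_exp; fold a; lra.
  - apply is_derive_phi_m1; lra.
  - assert (/ 1 < / x) by (apply Rinv_lt_contravar; lra).
    rewrite Rinv_1 in *; apply Rlt_not_eq; lra.
Qed.

Lemma completely_monotone_phi_inv_m1 : completely_monotone_from 0 (phi_inv phi_m1).
Proof.
  apply (completely_monotone_of_ode 0 (Monom 1 1 1)); [simpl; lra | | exact is_derive_phi_inv_m1].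
  intros t Ht; apply phi_inv_range; [apply phi_m1_root_exists; lra | exact phi_m1_1 | exact Ht].
Qed.

Theorem lemma4 :
  ((forall t : R, 0 <= t -> phi_inv phi_m1 t = - lambertW0 (- exp (- (t + 1)))) /\
   completely_monotone_from 0 (phi_inv phi_m1)) /\
  ((forall t : R, 0 <= t -> phi_inv phi_m2 t = t + 1 - sqrt ((t + 1) ^ 2 - 1)) /\
   completely_monotone_from 0 (phi_inv phi_m2)).
Proof.
  split; split.
  - exact phi_inv_m1_lambertW0.
  - exact completely_monotone_phi_inv_m1.
  - exact phi_inv_m2_closed_form.
  - exact completely_monotone_phi_inv_m2.
Qed.
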